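(* Let $\mathcal{P}$ be a collection of cells with maximal rectangles $\mathcal{B}_1,\dots,\mathcal{B}_p$ and switching rook polynomial $\sum_{j=0}^d\tilde r_j(\mathcal{P})t^j$, $d=r(\mathcal{P})$. Suppose $\tilde r_d(\mathcal{P})=1$, and let $\mathcal{T}$ be the unique canonical $r(\mathcal{P})$-rook configuration in $\mathcal{P}$ with respect to $\mathcal{B}_1,\dots,\mathcal{B}_p$. Then: (1) every column of $\mathcal{P}$ contains a cell occupied by a rook of $\mathcal{T}$, and every row of $\mathcal{P}$ contains a cell occupied by a rook of $\mathcal{T}$; (2) if $R$ is a rook placed in a cell of $\mathcal{P}$ not occupied by any rook of $\mathcal{T}$, then there exist exactly two rooks of $\mathcal{T}$ that are in attacking position with $R$.
   Context: A cell is $[a,a+(1,1)]\subset\mathbb{R}^2$ with $a\in\mathbb{Z}^2$ its lower left corner; a collection of cells is a non-empty finite set of cells. For lower left corners $a\le b$, the rectangle $[A,B]$ is the set of cells whose lower left corner $c$ satisfies $a\le c\le b$. A row (resp. column) of $\mathcal{P}$ is an inclusion-maximal rectangle of cells of $\mathcal{P}$ all having the same second (resp. first) lower-left coordinate. A maximal rectangle of $\mathcal{P}$ is a rectangle of cells of $\mathcal{P}$ not properly contained in another such. Two rooks on distinct cells attack each other if some row or column of $\mathcal{P}$ contains both cells; a $k$-rook configuration is a set of $k$ pairwise non-attacking rooks on distinct cells of $\mathcal{P}$; $r(\mathcal{P})$ is the max $k$. A switch moves two rooks of a configuration occupying the lower-left and upper-right (resp. upper-left and lower-right) corner cells of a rectangle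 all of whose cells lie in $\mathcal{P}$ to the other two corner cells; $\tilde r_k(\mathcal{P})$ is the number of classes of $k$-rook configurations modulo sequences of switches. Canonical configuration with respect to the ordering $\mathcal{B}_1,\dots,\mathcal{B}_p$: starting from a configuration, for $i=1,\dots,p$ in turn, the rooks currently lying in $\mathcal{B}_i$, occupying cells with first coordinates $x_1<\dots<x_r$ and second coordinates $y_1<\dots<y_r$, are replaced by rooks on the cells with lower left corners $(x_1,y_1),\dots,(x_r,y_r)$; the result is the canonical configuration of the starting one, and it is equivalent to it up to switches. *)

From HB Require Import structures.
From mathcomp Require Import all_boot all_order all_algebra.
From mathcomp Require Import finmap.
From mathcomp Require Import boolp.
From Stdlib Require Import Relations.
Import Order.TTheory GRing.Theory Num.Theory.

Set Implicit Arguments.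
Unset Strict Implicit.
Unset Printing Implicit Defensive.

Local Open Scope fset_scope.

(* A cell is identified with its lower left corner a in Z^2. *)
Definition cell : Type := (int * int)%type.

Definition in_rect (a b c : cell) : bool :=
  [&& (a.1 <= c.1)%R, (c.1 <= b.1)%R, (a.2 <= c.2)%R & (c.2 <= b.2)%R].

Definition rect_in (P : {fset cell}) (a b : cell) : Prop :=
  [/\ (a.1 <= b.1)%R, (a.2 <= b.2)%R & forall c, in_rect a b c -> c \in P].

Definition rect_sub (a b a' b' : cell) : Prop :=
  forall c, in_rect a b c -> in_rect a' b' c.

Definition is_row (P : {fset cell}) (a b : cell) : Prop :=
  [/\ rect_in P a b, a.2 = b.2 &
      forall a' b', rect_in P a' b' -> a'.2 = b'.2 ->
        rect_sub a b a' b' -> rect_sub a' b' a b].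

Definition is_col (P : {fset cell}) (a b : cell) : Prop :=
  [/\ rect_in P a b, a.1 = b.1 &
      forall a' b', rect_in P a' b' -> a'.1 = b'.1 ->
        rect_sub a b a' b' -> rect_sub a' b' a b].

Definition is_maxrect (P : {fset cell}) (a b : cell) : Prop :=
  rect_in P a b /\
  forall a' b', rect_in P a' b' -> rect_sub a b a' b' -> rect_sub a' b' a b.

Definition attacks (P : {fset cell}) (c d : cell) : Prop :=
  c <> d /\ exists a b, (is_row P a b \/ is_col P a b) /\
                        in_rect a b c /\ in_rect a b d.

Definition is_config (P : {fset cell}) (C : {fset cell}) : Prop :=
  C `<=` P /\ forall c d, c \in C -> d \in C -> ~ attacks P c d.

Definition is_rook_number (P : {fset cell}) (d : nat) : Prop :=
  (exists C, is_config P C /\ #|` C| = d) /\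
  (forall C, is_config P C -> (#|` C| <= d)%N).

Definition switch (P : {fset cell}) (C D : {fset cell}) : Prop :=
  exists a b : cell, a <> b /\ rect_in P a b /\
    let ul : cell := (a.1, b.2) in let lr : cell := (b.1, a.2) in
    ((a \in C /\ b \in C /\ D = (C `\ a `\ b) `|` [fset ul; lr]) \/
     (ul \in C /\ lr \in C /\ ul <> lr /\ D = (C `\ ul `\ lr) `|` [fset a; b])).

Definition sw_equiv (P : {fset cell}) : {fset cell} -> {fset cell} -> Prop :=
  clos_refl_trans _ (switch P).

Definition configs (P : {fset cell}) (k : nat) : {fset {fset cell}} :=
  [fset C in fpowerset P | `[< is_config P C >] && (#|` C| == k)].

Definition sw_class (P : {fset cell}) (k : nat) (C : {fset cell}) :
  {fset {fset cell}} :=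
  [fset D in configs P k | `[< sw_equiv P C D >]].

Definition rtilde (P : {fset cell}) (k : nat) : nat :=
  #|` [fset sw_class P k C | C in configs P k]|.

Definition canon_step (B : cell * cell) (C : {fset cell}) : {fset cell} :=
  let S := [fset c in C | in_rect B.1 B.2 c] in
  let xs := sort (fun x y : int => (x <= y)%R) (undup [seq c.1 | c <- enum_fset S]) in
  let ys := sort (fun x y : int => (x <= y)%R) (undup [seq c.2 | c <- enum_fset S]) in
  (C `\` S) `|` seq_fset tt (zip xs ys).

Definition canonical_config (Bs : seq (cell * cell)) (C : {fset cell}) : {fset cell} :=
  foldl (fun C' B => canon_step B C') C Bs.

From HB Require Import structures.
From mathcomp Require Import all_boot all_order all_algebra.
From mathcomp Require Import finmap boolp zify.
From Stdlib Require Import Relations.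

Set Implicit Arguments.
Unset Strict Implicit.
Unset Printing Implicit Defensive.

Local Open Scope fset_scope.

(* A maximum configuration C meets every row and every column of P. Otherwise
   take a cell a of a column K (say) containing no rook, and replace the rook
   lying in the row of a, if there is one, by a rook on a. This gives a
   configuration with at least as many rooks, hence again a maximum one, so it
   is switch-equivalent to C because rtilde_d(P) = 1. But every rook placed by
   a switch shares its column with a rook removed by the switch, and two cells
   of a rectangle of P in the same column lie in the same column of P; so no
   sequence of switches brings a rook into K.
   A step of the canonical procedure rearranges the rooks inside a rectangle of
   P without changing their sets of abscissae and ordinates, hence it keeps a
   configuration that meets every row and every column. Finally, a rook
   attacking a cell R lies in the row or in the column of R, each of which
   holds exactly one rook of T, and these two rooks differ when R is not in T. *)

Section Geometry.
Local Open Scope ring_scope.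
Variable P : {fset cell}.

Lemma rect_in_corners a b : rect_in P a b -> in_rect a b a /\ in_rect a b b.
Proof. by case=> ? ? _; rewrite /in_rect; split; lia. Qed.

Lemma in_rect_point a c : in_rect a a c -> c = a.
Proof. by case: a c => [? ?] [? ?]; rewrite /in_rect /= => ?; congr pair; lia. Qed.

Definition in_same_rect (u v : cell) : Prop :=
  exists a b, [/\ rect_in P a b, in_rect a b u & in_rect a b v].

Lemma col_mem_same_x k1 k2 u v :
  is_col P k1 k2 -> in_same_rect u v -> u.1 = v.1 ->
  in_rect k1 k2 u -> in_rect k1 k2 v.
Proof.
(* The hull of K and of the vertical segment from u to v is a vertical
   segment of P containing K, so by maximality it lies in K. *)
case=> [[_ _ inK] xK maxK] [a [b [[_ _ inB] uB vB]]] uv uK.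
rewrite /in_rect /= in uB vB uK.
set h1 : cell := (u.1, Num.min k1.2 v.2); set h2 : cell := (u.1, Num.max k2.2 v.2).
have hullP : rect_in P h1 h2.
  split=> /=; [lia | lia | move=> w wH].
  have /orP[/inK|/inB] // : in_rect k1 k2 w || in_rect a b w.
  by move: wH; rewrite /in_rect /=; lia.
have subK : rect_sub k1 k2 h1 h2 by move=> w; rewrite /in_rect /=; lia.
by apply: (maxK _ _ hullP erefl subK); rewrite /in_rect /=; lia.
Qed.

Lemma row_mem_same_y r1 r2 u v :
  is_row P r1 r2 -> in_same_rect u v -> u.2 = v.2 ->
  in_rect r1 r2 u -> in_rect r1 r2 v.
Proof.
case=> [[_ _ inW] yW maxW] [a [b [[_ _ inB] uB vB]]] uv uW.
rewrite /in_rect /= in uB vB uW.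
set h1 : cell := (Num.min r1.1 v.1, u.2); set h2 : cell := (Num.max r2.1 v.1, u.2).
have hullP : rect_in P h1 h2.
  split=> /=; [lia | lia | move=> w wH].
  have /orP[/inW|/inB] // : in_rect r1 r2 w || in_rect a b w.
  by move: wH; rewrite /in_rect /=; lia.
have subW : rect_sub r1 r2 h1 h2 by move=> w; rewrite /in_rect /=; lia.
by apply: (maxW _ _ hullP erefl subW); rewrite /in_rect /=; lia.
Qed.

(* [is_col P] and [is_row P] are convertible to [maximal_rect_of] for the
   constraints [a.1 = b.1] and [a.2 = b.2]. *)
Definition maximal_rect_of (Q : cell -> cell -> Prop) (a b : cell) : Prop :=
  [/\ rect_in P a b, Q a b &
      forall a' b', rect_in P a' b' -> Q a' b' ->
        rect_sub a b a' b' -> rect_sub a' b' a b].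

Lemma maximal_rect_exists (Q : cell -> cell -> Prop) a b :
  rect_in P a b -> Q a b ->
  exists a' b', maximal_rect_of Q a' b' /\ rect_sub a b a' b'.
Proof.
pose outside (a b : cell) := [fset c in P | ~~ in_rect a b c].
move: {2}#|` outside a b| (erefl #|` outside a b|) => n.
elim/ltn_ind: n a b => n IH a b outn abP Qab.
case: (pselect (exists a' b',
  [/\ rect_in P a' b', Q a' b', rect_sub a b a' b' & ~ rect_sub a' b' a b]))
  => [[a' [b' [a'P Qa' sub nsub]]] | nolarger].
- have [c ca' nca] : exists2 c, in_rect a' b' c & ~~ in_rect a b c.
    apply: contrapT => none; apply: nsub => c ca'.
    by apply: contrapT => /negP nca; apply: none; exists c.
  have lt_out : (#|` outside a' b'| < n)%N.
    rewrite -outn; apply: fproper_ltn_card; rewrite fproperE; apply/andP; split.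
      by apply/fsubsetP => w; rewrite !inE => /andP[-> /negP wa']; apply/negP => /sub.
    apply/negP => /fsubsetP /(_ c); rewrite !inE ca' nca andbT andbF.
    by case: a'P => _ _ inP /(_ (inP c ca')).
  have [a'' [b'' [mx sub']]] := IH _ lt_out a' b' erefl a'P Qa'.
  by exists a'', b''; split=> // w /sub /sub'.
- exists a, b; split=> //; split=> // a' b' a'P Qa' sub.
  by apply: contrapT => nsub; apply: nolarger; exists a', b'.
Qed.

Lemma col_exists c : c \in P -> exists a b, is_col P a b /\ in_rect a b c.
Proof.
move=> cP; have ccP : rect_in P c c by split=> // w /in_rect_point ->.
have [a [b [hK sub]]] :=
  maximal_rect_exists (Q := fun a b : cell => a.1 = b.1) ccP erefl.
by exists a, b; split=> //; apply: sub; rewrite /in_rect; lia.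
Qed.

Lemma row_exists c : c \in P -> exists a b, is_row P a b /\ in_rect a b c.
Proof.
move=> cP; have ccP : rect_in P c c by split=> // w /in_rect_point ->.
have [a [b [hW sub]]] :=
  maximal_rect_exists (Q := fun a b : cell => a.2 = b.2) ccP erefl.
by exists a, b; split=> //; apply: sub; rewrite /in_rect; lia.
Qed.

Lemma row_col_meet r1 r2 k1 k2 u v :
  is_row P r1 r2 -> is_col P k1 k2 ->
  in_rect r1 r2 u -> in_rect r1 r2 v -> in_rect k1 k2 u -> in_rect k1 k2 v -> u = v.
Proof.
case=> _ yW _ [_ xK _]; case: u v => [? ?] [? ?]; rewrite /in_rect /= => *.
by congr pair; lia.
Qed.

Lemma attacks_sym c d : attacks P c d -> attacks P d c.
Proof. by case=> ne [a [b [L [ca da]]]]; split; [exact/nesym | exists a, b]. Qed.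

Lemma attacks_same_coord c d : attacks P c d -> c.1 = d.1 \/ c.2 = d.2.
Proof.
case=> _ [a [b [[[_ e _]|[_ e _]] [ca da]]]]; rewrite /in_rect in ca da.
  by right; lia.
by left; lia.
Qed.

Lemma attacks_in_lines k1 k2 r1 r2 c e :
  is_col P k1 k2 -> in_rect k1 k2 c -> is_row P r1 r2 -> in_rect r1 r2 c ->
  attacks P c e -> in_rect k1 k2 e \/ in_rect r1 r2 e.
Proof.
move=> hK cK hW cW [_ [a [b [[hW'|hK'] [ca ea]]]]].
- have [abP yab _] := hW'.
  right; apply: (row_mem_same_y hW _ _ cW); first by exists a, b.
  by move: ca ea; rewrite /in_rect; lia.
- have [abP xab _] := hK'.
  left; apply: (col_mem_same_x hK _ _ cK); first by exists a, b.
  by move: ca ea; rewrite /in_rect; lia.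
Qed.

Lemma config_line_uniq T a b t t' :
  is_config P T -> is_row P a b \/ is_col P a b ->
  t \in T -> t' \in T -> in_rect a b t -> in_rect a b t' -> t = t'.
Proof.
move=> [_ noatt] line tT t'T ta t'a; apply: contrapT => ne.
by apply: (noatt t t' tT t'T); split=> //; exists a, b.
Qed.

End Geometry.

Section Switches.
Variable P : {fset cell}.

Lemma switch_mates X D z :
  switch P X D -> z \in D ->
  z \in X \/ exists x y, [/\ x \in X, y \in X, in_same_rect P z x /\ z.1 = x.1
                                            & in_same_rect P z y /\ z.2 = y.2].
Proof.
case=> a [b [_ [abP sw]]].
have [aab bab] := rect_in_corners abP; have [le1 le2 _] := abP.
have same u v : in_rect a b u -> in_rect a b v -> in_same_rect P u v by exists a, b.
have ulab : in_rect a b (a.1, b.2) by rewrite /in_rect /=; lia.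
have lrab : in_rect a b (b.1, a.2) by rewrite /in_rect /=; lia.
case: sw => [[aX [bX ->]] | [ulX [lrX [_ ->]]]];
  rewrite !inE => /orP[/andP[_ /andP[_ zX]] | /orP[/eqP-> | /eqP->]]; try by left.
- by right; exists a, b; split=> //; split=> //; apply: same.
- by right; exists b, a; split=> //; split=> //; apply: same.
- by right; exists (a.1, b.2), (b.1, a.2); split=> //; split=> //; apply: same.
- by right; exists (b.1, a.2), (a.1, b.2); split=> //; split=> //; apply: same.
Qed.

Definition switch_stable (L : pred cell) : Prop :=
  forall z x y, in_same_rect P z x -> z.1 = x.1 -> in_same_rect P z y -> z.2 = y.2 ->
    L z -> L x \/ L y.

Lemma col_switch_stable k1 k2 : is_col P k1 k2 -> switch_stable (in_rect k1 k2).
Proof. by move=> hK z x y zx ex _ _ zK; left; apply: col_mem_same_x hK zx ex zK. Qed.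

Lemma row_switch_stable r1 r2 : is_row P r1 r2 -> switch_stable (in_rect r1 r2).
Proof. by move=> hW z x y _ _ zy ey zW; right; apply: row_mem_same_y hW zy ey zW. Qed.

Lemma sw_equiv_avoid (L : pred cell) X Y :
  switch_stable L -> sw_equiv P X Y ->
  {in X, forall x, ~~ L x} -> {in Y, forall y, ~~ L y}.
Proof.
move=> stL; elim=> [X1 X2 sw | // | X1 X2 X3 _ IH12 _ IH23] avoid; last exact/IH23/IH12.
move=> z /(switch_mates sw) [/avoid // | [x [y [xX yX [zx ex] [zy ey]]]]].
apply/negP => /(stL _ _ _ zx ex zy ey) [Lx | Ly].
  by move: (avoid _ xX); rewrite Lx.
by move: (avoid _ yX); rewrite Ly.
Qed.

Lemma in_configs k X : X \in configs P k <-> is_config P X /\ #|` X| = k.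
Proof.
rewrite !inE fpowersetE /=; split; first by case/andP=> _ /andP[/asboolP ? /eqP].
by case=> XP <-; rewrite XP.1 eqxx andbT; apply/asboolP.
Qed.

Lemma rtilde1_sw_equiv k X Y :
  rtilde P k = 1%N -> X \in configs P k -> Y \in configs P k -> sw_equiv P X Y.
Proof.
move=> /eqP/cardfs1P[cl one] Xk Yk.
have classE C : C \in configs P k -> sw_class P k C = cl.
  by move=> Ck; apply/fset1P; rewrite -one; apply: in_imfset.
have: Y \in sw_class P k Y.
  by rewrite inE /=; apply/andP; split=> //; apply/asboolP; apply: rt_refl.
by rewrite classE // -(classE X) // inE /= => /andP[_ /asboolP].
Qed.

End Switches.

Lemma leq_cardfs_sepN (K : choiceType) (C : {fset K}) (M : pred K) :
  {in C &, forall e e', M e -> M e' -> e = e'} ->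
  (#|` C| <= (#|` [fset e in C | ~~ M e]|).+1)%N.
Proof.
move=> uniqM; case: (pselect (exists2 t, t \in C & M t)) => [[t tC Mt] | noM].
- have sub : (C `\ t) `<=` [fset e in C | ~~ M e].
    apply/fsubsetP => e; rewrite !inE => /andP[et eC]; rewrite eC /=; apply/negP => Me.
    by rewrite (uniqM _ _ eC tC Me Mt) eqxx in et.
  by rewrite (cardfsD1 t) tC ltnS fsubset_leq_card.
- have sub : C `<=` [fset e in C | ~~ M e].
    by apply/fsubsetP => e eC; rewrite !inE eC; apply/negP => Me; apply: noM; exists e.
  exact/leqW/fsubset_leq_card.
Qed.

Definition hits_cols (P X : {fset cell}) : Prop :=
  forall a b, is_col P a b -> exists t, t \in X /\ in_rect a b t.

Definition hits_rows (P X : {fset cell}) : Prop :=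
  forall a b, is_row P a b -> exists t, t \in X /\ in_rect a b t.

Definition spanning_config (P X : {fset cell}) : Prop :=
  [/\ is_config P X, hits_cols P X & hits_rows P X].

Section MaximumConfigurations.
Variables (P : {fset cell}) (d : nat) (C : {fset cell}).
Hypotheses (rookP : is_rook_number P d) (rtilde1 : rtilde P d = 1%N).
Hypotheses (confC : is_config P C) (cardC : #|` C| = d).

Lemma max_config_meets (L M : pred cell) a :
  switch_stable P L -> a \in P -> L a ->
  (forall e, e \in C -> attacks P a e -> L e \/ M e) ->
  {in C &, forall e e', M e -> M e' -> e = e'} ->
  exists t, t \in C /\ L t.
Proof.
(* Adding [a] and removing the at most one rook satisfying [M] keeps at least
   [d] rooks: a maximum configuration equivalent to [C] that meets [L]. *)
move=> stL aP La attL uniqM; apply: contrapT => noL.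
have avoidC : {in C, forall x, ~~ L x}.
  by move=> x xC; apply/negP => Lx; apply: noL; exists x.
have aC : a \notin C by apply/negP => /avoidC; rewrite La.
set C' := a |` [fset e in C | ~~ M e].
have noatt e : e \in C -> ~~ M e -> ~ attacks P a e.
  move=> eC nMe /(attL _ eC) [Le | Me]; first by move: (avoidC _ eC); rewrite Le.
  by move: nMe; rewrite Me.
have confC' : is_config P C'.
  split.
    apply/fsubsetP => z; rewrite !inE => /orP[/eqP -> // | /andP[zC _]].
    exact: (fsubsetP confC.1).
  move=> c e; rewrite !inE => /orP[/eqP-> | /andP[cC cM]] /orP[/eqP-> | /andP[eC eM]].
  - by case.
  - exact: noatt.
  - by move/attacks_sym; apply: noatt.
  - exact: confC.2.
have cardC' : #|` C'| = d.
  have := leq_cardfs_sepN uniqM; have := rookP.2 _ confC'.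
  by rewrite cardfsU1 !inE (negbTE aC) /= cardC; lia.
have CC' : sw_equiv P C C' by apply: (rtilde1_sw_equiv rtilde1); apply/in_configs.
by have := sw_equiv_avoid stL CC' avoidC (fset1U1 _ _); rewrite La.
Qed.

Lemma max_config_spanning : spanning_config P C.
Proof.
split=> // a b; [move=> hK | move=> hW].
- have [abK _ _] := hK; have [_ _ inK] := abK; have [aK _] := rect_in_corners abK.
  have [r1 [r2 [hW aW]]] := row_exists (inK _ aK).
  apply: (max_config_meets (M := in_rect r1 r2) (col_switch_stable hK) (inK _ aK) aK).
    by move=> e _; apply: attacks_in_lines.
  by move=> e e' eC e'C; apply: (config_line_uniq confC (or_introl hW)).
- have [abW _ _] := hW; have [_ _ inW] := abW; have [aW _] := rect_in_corners abW.
  have [k1 [k2 [hK aK]]] := col_exists (inW _ aW).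
  apply: (max_config_meets (M := in_rect k1 k2) (row_switch_stable hW) (inW _ aW) aW).
    by move=> e _ /(attacks_in_lines hK aK hW aW) [] ?; [right | left].
  by move=> e e' eC e'C; apply: (config_line_uniq confC (or_intror hK)).
Qed.

End MaximumConfigurations.

Section Replacement.
Variables (P X S Z : {fset cell}) (a b : cell).
Hypotheses (abP : rect_in P a b) (confX : is_config P X) (SX : S `<=` X).
Hypothesis SB : {in S, forall s, in_rect a b s}.
Hypothesis ZB : {in Z, forall z, in_rect a b z}.
Hypothesis Z_x : {in Z, forall z, exists2 s, s \in S & s.1 = z.1}.
Hypothesis Z_y : {in Z, forall z, exists2 s, s \in S & s.2 = z.2}.
Hypothesis Z_coord_inj :
  {in Z &, forall z z', z.1 = z'.1 \/ z.2 = z'.2 -> z = z'}.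

Let same_rect u v : in_rect a b u -> in_rect a b v -> in_same_rect P u v.
Proof. by exists a, b. Qed.

Lemma replace_config : is_config P ((X `\` S) `|` Z).
Proof.
have new_old z c : z \in Z -> c \in X -> c \notin S -> ~ attacks P z c.
  move=> zZ cX cS [_ [r1 [r2 [[hW|hK] [zL cL]]]]].
  - have [s sS sz] := Z_y zZ; have sX := fsubsetP SX _ sS.
    have sL := row_mem_same_y hW (same_rect (ZB zZ) (SB sS)) (esym sz) zL.
    by move: cS; rewrite -(config_line_uniq confX (or_introl hW) sX cX sL cL) sS.
  - have [s sS sz] := Z_x zZ; have sX := fsubsetP SX _ sS.
    have sL := col_mem_same_x hK (same_rect (ZB zZ) (SB sS)) (esym sz) zL.
    by move: cS; rewrite -(config_line_uniq confX (or_intror hK) sX cX sL cL) sS.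
split.
  apply/fsubsetP => z; rewrite !inE => /orP[/andP[_ /(fsubsetP confX.1)] // | /ZB].
  by case: abP => _ _; apply.
move=> c e; rewrite !inE => /orP[/andP[cS cX] | cZ] /orP[/andP[eS eX] | eZ].
- exact: confX.2.
- by move/attacks_sym; apply: new_old.
- exact: new_old.
- move=> att; have [ne _] := att.
  by apply/ne/Z_coord_inj => //; apply: attacks_same_coord att.
Qed.

Hypothesis S_x : {in S, forall s, exists2 z, z \in Z & z.1 = s.1}.
Hypothesis S_y : {in S, forall s, exists2 z, z \in Z & z.2 = s.2}.

Lemma replace_hits_cols : hits_cols P X -> hits_cols P ((X `\` S) `|` Z).
Proof.
move=> hitsX k1 k2 hK; have [t [tX tK]] := hitsX _ _ hK.
case: (boolP (t \in S)) => [tS | tS]; last by exists t; rewrite !inE tS tX.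
have [z zZ zt] := S_x tS.
exists z; split; first by rewrite !inE zZ orbT.
exact: col_mem_same_x hK (same_rect (SB tS) (ZB zZ)) (esym zt) tK.
Qed.

Lemma replace_hits_rows : hits_rows P X -> hits_rows P ((X `\` S) `|` Z).
Proof.
move=> hitsX r1 r2 hW; have [t [tX tW]] := hitsX _ _ hW.
case: (boolP (t \in S)) => [tS | tS]; last by exists t; rewrite !inE tS tX.
have [z zZ zt] := S_y tS.
exists z; split; first by rewrite !inE zZ orbT.
exact: row_mem_same_y hW (same_rect (SB tS) (ZB zZ)) (esym zt) tW.
Qed.

End Replacement.

Lemma uniq_map_inj_in (T U : eqType) (f : T -> U) (s : seq T) :
  uniq (map f s) -> {in s &, injective f}.
Proof.
elim: s => //= x s IH /andP[fx us] y z; rewrite !inE.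
move=> /orP[/eqP-> | ys] /orP[/eqP-> | zs] // e.
- by move: fx; rewrite e map_f.
- by move: fx; rewrite -e map_f.
- exact: IH.
Qed.

Section CanonStep.
Variables (P : {fset cell}) (B : cell * cell) (X : {fset cell}).
Hypotheses (BP : rect_in P B.1 B.2) (confX : is_config P X).

Let S := [fset c in X | in_rect B.1 B.2 c].
Let xs := sort (fun x y : int => (x <= y)%R) (undup [seq c.1 | c <- enum_fset S]).
Let ys := sort (fun x y : int => (x <= y)%R) (undup [seq c.2 | c <- enum_fset S]).
Let Z := zip xs ys.

Let S_X : S `<=` X.
Proof. by apply/fsubsetP => c; rewrite !inE => /andP[]. Qed.

Let S_B : {in S, forall s, in_rect B.1 B.2 s}.
Proof. by move=> c; rewrite !inE => /andP[]. Qed.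

Let S_inj1 : {in S &, injective (fun c : cell => c.1)}.
Proof.
move=> s s' sS s'S e; have sX := fsubsetP S_X _ sS; have s'X := fsubsetP S_X _ s'S.
have [k1 [k2 [hK sK]]] := col_exists (fsubsetP confX.1 _ sX).
apply: (config_line_uniq confX (or_intror hK) sX s'X sK).
by apply: (col_mem_same_x hK _ e sK); exists B.1, B.2; rewrite !S_B.
Qed.

Let S_inj2 : {in S &, injective (fun c : cell => c.2)}.
Proof.
move=> s s' sS s'S e; have sX := fsubsetP S_X _ sS; have s'X := fsubsetP S_X _ s'S.
have [r1 [r2 [hW sW]]] := row_exists (fsubsetP confX.1 _ sX).
apply: (config_line_uniq confX (or_introl hW) sX s'X sW).
by apply: (row_mem_same_y hW _ e sW); exists B.1, B.2; rewrite !S_B.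
Qed.

Let size_xs : size xs = #|` S|.
Proof. by rewrite size_sort undup_id ?size_map // map_inj_in_uniq // fset_uniq. Qed.

Let size_ys : size ys = #|` S|.
Proof. by rewrite size_sort undup_id ?size_map // map_inj_in_uniq // fset_uniq. Qed.

Let unzip1_Z : unzip1 Z = xs.
Proof. by rewrite unzip1_zip // size_xs size_ys. Qed.

Let unzip2_Z : unzip2 Z = ys.
Proof. by rewrite unzip2_zip // size_xs size_ys. Qed.

Let Z_x : {in seq_fset tt Z, forall z : cell, exists2 s : cell, s \in S & s.1 = z.1}.
Proof.
move=> z; rewrite seq_fsetE => zZ; have : z.1 \in xs by rewrite -unzip1_Z map_f.
by rewrite mem_sort mem_undup => /mapP[s sS ->]; exists s.
Qed.

Let Z_y : {in seq_fset tt Z, forall z : cell, exists2 s : cell, s \in S & s.2 = z.2}.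
Proof.
move=> z; rewrite seq_fsetE => zZ; have : z.2 \in ys by rewrite -unzip2_Z map_f.
by rewrite mem_sort mem_undup => /mapP[s sS ->]; exists s.
Qed.

Let S_x : {in S, forall s, exists2 z, z \in seq_fset tt Z & z.1 = s.1}.
Proof.
move=> s sS; have : s.1 \in unzip1 Z by rewrite unzip1_Z mem_sort mem_undup map_f.
by case/mapP=> z zZ ->; exists z; rewrite ?seq_fsetE.
Qed.

Let S_y : {in S, forall s, exists2 z, z \in seq_fset tt Z & z.2 = s.2}.
Proof.
move=> s sS; have : s.2 \in unzip2 Z by rewrite unzip2_Z mem_sort mem_undup map_f.
by case/mapP=> z zZ ->; exists z; rewrite ?seq_fsetE.
Qed.

Let Z_B : {in seq_fset tt Z, forall z : cell, in_rect B.1 B.2 z}.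
Proof.
move=> z zZ; have [s sS sz] := Z_x zZ; have [s' s'S s'z] := Z_y zZ.
by move: (S_B sS) (S_B s'S); rewrite /in_rect; lia.
Qed.

Let Z_coord_inj :
  {in seq_fset tt Z &, forall z z', z.1 = z'.1 \/ z.2 = z'.2 -> z = z'}.
Proof.
have ux : uniq (unzip1 Z) by rewrite unzip1_Z sort_uniq undup_uniq.
have uy : uniq (unzip2 Z) by rewrite unzip2_Z sort_uniq undup_uniq.
move=> z z'; rewrite !seq_fsetE => zZ z'Z [].
- exact: (uniq_map_inj_in ux).
- exact: (uniq_map_inj_in uy).
Qed.

Lemma canon_step_spanning :
  hits_cols P X -> hits_rows P X -> spanning_config P (canon_step B X).
Proof.
move=> cols rows; split.
- exact: replace_config BP confX S_X S_B Z_B Z_x Z_y Z_coord_inj.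
- exact: replace_hits_cols S_B Z_B S_x cols.
- exact: replace_hits_rows S_B Z_B S_y rows.
Qed.

End CanonStep.

Lemma canonical_config_spanning P Bs X :
  {in Bs, forall B, rect_in P B.1 B.2} -> spanning_config P X ->
  spanning_config P (canonical_config Bs X).
Proof.
elim: Bs X => [|B Bs IH] X BsP [confX cols rows] //.
apply: IH; first by move=> B' B'Bs; apply: BsP; rewrite inE B'Bs orbT.
by apply: canon_step_spanning => //; apply: BsP; rewrite inE eqxx.
Qed.

Lemma spanning_config_attackers P T R :
  spanning_config P T -> R \in P -> R \notin T ->
  exists t1 t2, t1 <> t2 /\ [/\ t1 \in T, t2 \in T, attacks P R t1, attacks P R t2 &
                     forall t, t \in T -> attacks P R t -> t = t1 \/ t = t2].
Proof.
case=> confT cols rows RP RT.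
have [r1 [r2 [hW RW]]] := row_exists RP; have [t1 [t1T t1W]] := rows _ _ hW.
have [k1 [k2 [hK RK]]] := col_exists RP; have [t2 [t2T t2K]] := cols _ _ hK.
have neR t : t \in T -> R <> t by move=> tT eRt; move: RT; rewrite eRt tT.
exists t1, t2; split.
  by move=> e12; apply: (neR _ t1T); apply: (row_col_meet hW hK RW t1W RK); rewrite e12.
split=> //.
- by split; [exact: neR | exists r1, r2; split; [left |]].
- by split; [exact: neR | exists k1, k2; split; [right |]].
move=> t tT /(attacks_in_lines hK RK hW RW) [tK | tW].
- by right; apply: (config_line_uniq confT (or_intror hK) tT t2T tK t2K).
- by left; apply: (config_line_uniq confT (or_introl hW) tT t1T tW t1W).
Qed.

Theorem lemma4p1 (P : {fset cell}) (Bs : seq (cell * cell)) (d : nat)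
    (C : {fset cell}) :
  P != fset0 ->
  uniq Bs ->
  (forall a b : cell, (a, b) \in Bs <-> is_maxrect P a b) ->
  is_rook_number P d ->
  rtilde P d = 1%N ->
  is_config P C -> #|` C| = d ->
  let T := canonical_config Bs C in
  (forall a b, is_col P a b -> exists t, t \in T /\ in_rect a b t) /\
  (forall a b, is_row P a b -> exists t, t \in T /\ in_rect a b t) /\
  (forall R, R \in P -> R \notin T ->
     exists t1 t2, t1 <> t2 /\ [/\ t1 \in T, t2 \in T,
                      attacks P R t1, attacks P R t2 &
                      forall t, t \in T -> attacks P R t -> t = t1 \/ t = t2]).
Proof.
move=> _ _ maxrects rookP rtilde1 confC cardC T.
have BsP : {in Bs, forall B, rect_in P B.1 B.2} by case=> a b /maxrects [].
have [confT colsT rowsT] : spanning_config P T.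
  exact: canonical_config_spanning BsP (max_config_spanning rookP rtilde1 confC cardC).
by split=> //; split=> // R; apply: spanning_config_attackers.
Qed.
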